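(* Let $G=(V,E)$ be a connected undirected graph with at least one edge and let $\lambda$ be the largest eigenvalue of the matrix $K$ defined below. Then every truthful mechanism $M$ for the Vertex Cover set system of $G$ has frugality ratio $\phi_M\ge\lambda/2$.
   Context: A mechanism for a set system takes bids $b$, selects a feasible winning set $S$ and pays each winner $e$ an amount $p_e\ge b_e$; profit is $p_e-c_e$ for winners and $0$ otherwise; truthful means that for every agent and every fixed bids of the others, bidding one's true cost $c_e$ maximizes profit. $p_M(c)$ is the total payment when bids equal costs $c$; $y(X)=\sum_{e\in X}y_e$. Lower bound $\nu(c)$: with $S$ a feasible set minimizing $c(S)$ (ties broken lexicographically), $\nu(c)$ is the maximum of $x(S)$ subject to $x_e\ge c_e$ for all $e$, $x_e=c_e$ for $e\notin S$, and $x(S)\le x(T)$ for all feasible $T$. Frugality ratio $\phi_M=\sup_c p_M(c)/\nu(c)$. Vertex Cover set system of $G$: agents are the vertices, feasible sets are the vertex covers of $G$. $\nu_v=\nu(\mathbf 1_v)$ where $\mathbf 1_v$ has $1$ at $v$, $0$ elsewhere. $K$ is the $V\times V$ matrix with $K_{uv}=1/\nu_u$ if $u\sim v$ and $0$ otherwise (i.e. $K=\mathrm{diag}(1/\nu_v)A$ with $A$ the adjacency matrix); $\lambda$ is its largest (real) eigenvalue. *)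

From HB Require Import structures.
From mathcomp Require Import all_boot all_order all_algebra.
From Stdlib Require Import ClassicalEpsilon.
Set Implicit Arguments. Unset Strict Implicit. Unset Printing Implicit Defensive.
Import Order.TTheory GRing.Theory Num.Theory.
Local Open Scope ring_scope.

Section VC.
Variable R : realFieldType.
Variable n : nat.
(* the graph: vertices 'I_n, adjacency relation adj (assumed symmetric and
   irreflexive in the theorem) *)
Variable adj : rel 'I_n.

Definition vec := 'I_n -> R.
Definition nonneg (c : vec) : Prop := forall e, 0 <= c e.

Definition wt (y : vec) (X : {set 'I_n}) : R := \sum_(e in X) y e.

Definition is_cover (S : {set 'I_n}) : bool :=
  [forall u, forall v, adj u v ==> (u \in S) || (v \in S)].

(* lexicographic order on vertex sets: compare the increasing lists of
   their elements lexicographically (a proper prefix is smaller) *)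
Fixpoint lex_le (s t : seq nat) : bool :=
  match s, t with
  | [::], _ => true
  | _ :: _, [::] => false
  | x :: s', y :: t' => (x < y)%N || ((x == y) && lex_le s' t')
  end.
Definition elems (S : {set 'I_n}) : seq nat := [seq val i | i <- enum S].

Definition opt_cover (c : vec) (S : {set 'I_n}) : bool :=
  is_cover S &&
  [forall T : {set 'I_n}, is_cover T ==>
     (wt c S < wt c T) || ((wt c S == wt c T) && lex_le (elems S) (elems T))].

Definition optS (c : vec) : {set 'I_n} := odflt setT [pick S | opt_cover c S].

Definition nu_feasible (c : vec) (x : vec) : Prop :=
  (forall e, c e <= x e) /\
  (forall e, e \notin optS c -> x e = c e) /\
  (forall T, is_cover T -> wt x (optS c) <= wt x T).

Definition is_nu (c : vec) (t : R) : Prop :=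
  (exists x, nu_feasible c x /\ wt x (optS c) = t) /\
  (forall x, nu_feasible c x -> wt x (optS c) <= t).

(* nu(c): the maximum (which exists: the LP is feasible and bounded) *)
Definition nu (c : vec) : R := epsilon (inhabits 0) (is_nu c).

Definition unitv (v : 'I_n) : vec := fun e => if e == v then 1 else 0.

Definition Kmx : 'M[R]_n :=
  \matrix_(u, v) (if adj u v then (nu (unitv u))^-1 else 0).

Record mechanism := Mechanism {
  win : vec -> {set 'I_n};
  pay : vec -> 'I_n -> R }.

Definition valid_mech (M : mechanism) : Prop :=
  forall b, nonneg b ->
    is_cover (win M b) /\ (forall e, e \in win M b -> b e <= pay M b e).

Definition upd (b : vec) (e : 'I_n) (x : R) : vec :=
  fun j => if j == e then x else b j.

Definition profit (M : mechanism) (b : vec) (e : 'I_n) (ce : R) : R :=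
  if e \in win M b then pay M b e - ce else 0.

Definition truthful (M : mechanism) : Prop :=
  forall (e : 'I_n) (ce : R) (b : vec), 0 <= ce -> nonneg b ->
    forall x, 0 <= x -> profit M (upd b e x) e ce <= profit M (upd b e ce) e ce.

Definition total_pay (M : mechanism) (c : vec) : R :=
  \sum_(e in win M c) pay M c e.

(* phi_M = sup_c p_M(c)/nu(c) >= t, with the extended-real conventions
   p/0 = +oo for p > 0 and 0/0 excluded *)
Definition frugality_ge (M : mechanism) (t : R) : Prop :=
  forall r, r < t -> exists c, nonneg c /\ r * nu c < total_pay M c.

End VC.

(* Let [w] be a left eigenvector of [K] for [lam] and [x u = w u / nu_u]; as the
   adjacency relation is symmetric, [sum_(v ~ u) x v = lam nu_u x u], hence
   [sum_(u ~ v) x u x v = lam Q] with [Q = sum_u nu_u (x u)^2 > 0].  Let [y = |x|]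
   and let [c_u] be the bid vector with [y u] at [u] and [0] elsewhere; [nu] is
   positively homogeneous, so [sum_u y u nu(c_u) = Q].  For an edge [uv], one of
   [u], [v] wins when [u] bids [y u] and [v] bids [y v]; if [v] does, truthfulness
   for [v] with true cost [0] shows that [v] is paid at least [y v] under [c_u].
   Hence [y u y v <= y u p_v(c_u) + y v p_u(c_v)], and summing over the edges gives
   [lam Q <= 2 sum_u y u p_M(c_u)]: some [c_u] has [p_M(c_u) > r nu(c_u)] as soon
   as [r < lam / 2].
   The maximum defining [nu] is attained, which makes [nu] meaningful and
   homogeneous; this is shown by Fourier-Motzkin elimination, valid over any
   real field. *)

From HB Require Import structures.
From mathcomp Require Import all_boot all_order all_algebra ring lra.
From Stdlib Require Import ClassicalEpsilon FunctionalExtensionality.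
Import Order.TTheory GRing.Theory Num.Theory.
Local Open Scope ring_scope.

Set Implicit Arguments.
Unset Strict Implicit.
Unset Printing Implicit Defensive.

Lemma exists_minimal (T : eqType) (le : rel T) (s : seq T) x0 :
  total le -> transitive le -> x0 \in s ->
  exists2 m, m \in s & forall y, y \in s -> le m y.
Proof.
move=> le_total le_tr; elim: s x0 => [//|a s IH] x0 _.
have le_refl : le a a by case/orP: (le_total a a).
case: s IH => [|b s] IH.
  by exists a => [|y]; rewrite ?mem_head // inE => /eqP ->.
have [m ms m_min] := IH b (mem_head _ _).
case/orP: (le_total a m) => [am|ma].
  exists a => [|y]; first exact: mem_head.
  by rewrite inE => /orP[/eqP ->//|ys]; exact: le_tr am (m_min _ ys).
exists m => [|y]; first by rewrite inE ms orbT.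
by rewrite inE => /orP[/eqP ->|]; [|exact: m_min].
Qed.

Section FourierMotzkin.
Variables (R : realFieldType) (I : finType).

(* [(a, b) : ineq] stands for the inequality [a . x <= b]. *)
Definition ineq := ({ffun I -> R} * R)%type.
Definition dotf (a : {ffun I -> R}) (x : I -> R) := \sum_i a i * x i.
Definition solves (cs : seq ineq) (x : I -> R) :=
  all (fun c : ineq => dotf c.1 x <= c.2) cs.
Definition fupd (x : I -> R) (j : I) (y : R) i := if i == j then y else x i.

Implicit Types (a : {ffun I -> R}) (x : I -> R) (cs : seq ineq) (i j : I).

Lemma dotf_ext a x x' : x =1 x' -> dotf a x = dotf a x'.
Proof. by move=> xx'; apply: eq_bigr => i _; rewrite xx'. Qed.

Lemma solves_ext cs x x' : x =1 x' -> solves cs x = solves cs x'.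
Proof. by move=> xx'; apply: eq_all => c; rewrite (dotf_ext _ xx'). Qed.

Lemma dotf_fupd a x j y : dotf a (fupd x j y) = dotf a x + a j * (y - x j).
Proof.
rewrite /dotf (bigD1 j) //= [in RHS](bigD1 j) //= /fupd eqxx.
rewrite (eq_bigr (fun i => a i * x i)) => [|i /negbTE ->//]; lra.
Qed.

Lemma dotf_fupd0 a x j y : a j = 0 -> dotf a (fupd x j y) = dotf a x.
Proof. by move=> aj; rewrite dotf_fupd aj mul0r addr0. Qed.

Lemma dotf_lincomb s t a a' x :
  dotf [ffun i => s * a i + t * a' i] x = s * dotf a x + t * dotf a' x.
Proof.
rewrite /dotf !mulr_sumr -big_split; apply: eq_bigr => i _.
by rewrite ffunE mulrDl !mulrA.
Qed.

Lemma dotfN a x : dotf [ffun i => - a i] x = - dotf a x.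
Proof. by rewrite /dotf -sumrN; apply: eq_bigr => i _; rewrite ffunE mulNr. Qed.

Lemma dotfB a a' x : dotf [ffun i => a i - a' i] x = dotf a x - dotf a' x.
Proof. by rewrite /dotf -sumrB; apply: eq_bigr => i _; rewrite ffunE mulrBl. Qed.

Definition fm_comb j (p q : ineq) : ineq :=
  ([ffun i => - q.1 j * p.1 i + p.1 j * q.1 i], - q.1 j * p.2 + p.1 j * q.2).

Definition fm_elim j cs : seq ineq :=
  [seq c <- cs | (c : ineq).1 j == 0] ++
  [seq fm_comb j p q | p <- [seq c <- cs | 0 < (c : ineq).1 j],
                       q <- [seq c <- cs | (c : ineq).1 j < 0]].

Lemma fm_comb_coef j p q : (fm_comb j p q).1 j = 0.
Proof. by rewrite /= ffunE; ring. Qed.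

Lemma fm_elim_coef j cs c : c \in fm_elim j cs -> c.1 j = 0.
Proof.
rewrite mem_cat => /orP[|/allpairsP[[p q] [_ _ ->]]]; last exact: fm_comb_coef.
by rewrite mem_filter => /andP[/eqP].
Qed.

Lemma fm_elim_coef0 i j cs c : (forall c', c' \in cs -> c'.1 i = 0) ->
  c \in fm_elim j cs -> c.1 i = 0.
Proof.
move=> cs0; rewrite mem_cat => /orP[|/allpairsP[[p q] [/= p_cs q_cs ->]]].
  by rewrite mem_filter => /andP[_ /cs0].
move: p_cs q_cs; rewrite !mem_filter => /andP[_ /cs0 p0] /andP[_ /cs0 q0].
by rewrite /= ffunE p0 q0; ring.
Qed.

Lemma exists_between (ls us : seq R) :
  (forall l u, l \in ls -> u \in us -> l <= u) ->
  exists y, (forall l, l \in ls -> l <= y) /\ (forall u, u \in us -> y <= u).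
Proof.
case: us => [|u0 us] lu.
  exists (\sum_(l <- ls) `|l|); split=> // l l_ls.
  apply: le_trans (real_ler_norm (num_real l)) _.
  rewrite (big_rem l l_ls) /= lerDl; exact: sumr_ge0.
have [m m_us m_min] :=
  exists_minimal (@le_total _ R) (@le_trans _ R) (mem_head u0 us).
by exists m; split=> [l l_ls|]; [exact: lu|].
Qed.

Lemma fm_elimP j cs x : solves (fm_elim j cs) x <-> exists y, solves cs (fupd x j y).
Proof.
split; last first.
  move=> [y /allP sol]; apply/allP => c; rewrite mem_cat.
  case/orP=> [|/allpairsP[[p q] [/= p_cs q_cs ->]]].
    rewrite mem_filter => /andP[/eqP cj c_cs].
    by move: (sol c c_cs); rewrite dotf_fupd0.
  move: p_cs q_cs; rewrite !mem_filter => /andP[pj p_cs] /andP[qj q_cs].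
  rewrite -(dotf_fupd0 x y (fm_comb_coef j p q)) dotf_lincomb /=.
  apply: lerD; apply: ler_wpM2l.
  - by rewrite oppr_ge0 ltW.
  - exact: (sol p p_cs).
  - exact: ltW.
  - exact: (sol q q_cs).
move=> /allP sol.
pose P := [seq c <- cs | 0 < (c : ineq).1 j].
pose N := [seq c <- cs | (c : ineq).1 j < 0].
pose bnd (c : ineq) := (c.2 - dotf c.1 x) / c.1 j + x j.
have bnd_le p q : p \in P -> q \in N -> bnd q <= bnd p.
  move=> pP qN; have := sol (fm_comb j p q).
  rewrite mem_cat (allpairs_f (fm_comb j)) ?orbT // => /(_ isT).
  move: pP qN; rewrite !mem_filter /bnd lerD2r => /andP[pj _] /andP[qj _].
  rewrite dotf_lincomb ler_ndivrMr // mulrAC ler_pdivrMr //=; lra.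
have [y [yN yP]] : exists y, (forall l, l \in map bnd N -> l <= y) /\
                             (forall u, u \in map bnd P -> y <= u).
  by apply: exists_between => _ _ /mapP[q qN ->] /mapP[p pP ->]; exact: bnd_le.
exists y; apply/allP => c c_cs; rewrite /= dotf_fupd.
case: (ltrgtP (c.1 j) 0) => cj.
- have := yN _ (map_f bnd (_ : c \in N)); rewrite mem_filter cj c_cs => /(_ isT).
  by rewrite /bnd -lerBrDr ler_ndivrMr // -lerBrDl mulrC.
- have := yP _ (map_f bnd (_ : c \in P)); rewrite mem_filter cj c_cs => /(_ isT).
  by rewrite /bnd -lerBlDr ler_pdivlMr // -lerBrDl mulrC.
- by rewrite cj mul0r addr0 sol // mem_cat mem_filter cj eqxx c_cs.
Qed.

Definition fm_elim_all (js : seq I) cs := foldr fm_elim cs js.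
Definition fmerge (js : seq I) (y x : I -> R) i := if i \in js then y i else x i.

Lemma fm_elim_all_coef js cs c j :
  c \in fm_elim_all js cs -> j \in js -> c.1 j = 0.
Proof.
elim: js c => [//|j' js IH] c /= c_elim; rewrite inE => /orP[/eqP ->|j_js].
  exact: fm_elim_coef c_elim.
by apply: fm_elim_coef0 c_elim => c' /IH; apply.
Qed.

Lemma fm_elim_allP js cs x :
  solves (fm_elim_all js cs) x <-> exists y, solves cs (fmerge js y x).
Proof.
elim: js x => [|j js IH] x /=.
  by split=> [sol|[y]]; [exists x|]; rewrite (@solves_ext _ _ x).
rewrite fm_elimP; split=> [[y0 /IH[y sol]]|[y sol]].
  exists (fun i => if i \in js then y i else y0).
  rewrite -(solves_ext _ (_ : fmerge js y (fupd x j y0) =1 _)) // => i.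
  by rewrite /fmerge /fupd inE; case: (i \in js); rewrite ?orbT ?orbF.
exists (y j); apply/IH; exists y.
rewrite (solves_ext _ (_ : _ =1 fmerge (j :: js) y x)) // => i.
rewrite /fmerge /fupd inE; case: (i \in js); rewrite ?orbT ?orbF //.
by case: eqP => [->|].
Qed.

End FourierMotzkin.

Section LinearProgram.
Variable R : realFieldType.

Lemma max_attained_1d (cs : seq (R * R)) t0 B :
  all (fun c => c.1 * t0 <= c.2) cs ->
  (forall t, all (fun c => c.1 * t <= c.2) cs -> t <= B) ->
  exists2 m, all (fun c => c.1 * m <= c.2) cs &
    forall t, all (fun c => c.1 * t <= c.2) cs -> t <= m.
Proof.
move=> ok_t0 bounded; pose ok t := all (fun c : R * R => c.1 * t <= c.2) cs.
pose ubs := [seq c.2 / c.1 | c <- cs & 0 < c.1].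
have ok_ub t : ok t -> forall u, u \in ubs -> t <= u.
  move=> /allP ok_t u /mapP[c]; rewrite mem_filter => /andP[c1 c_cs] ->.
  by rewrite ler_pdivlMr // mulrC ok_t.
have ub_ok t : t0 <= t -> (forall u, u \in ubs -> t <= u) -> ok t.
  move=> t0t t_ub; apply/allP => c c_cs; have := allP ok_t0 c c_cs.
  case: (ltrgtP c.1 0) => c1 c_t0.
  - by apply: le_trans c_t0; rewrite ler_wnM2l // ltW.
  - rewrite mulrC -ler_pdivlMr //; apply: t_ub.
    by apply/mapP; exists c; rewrite // mem_filter c1.
  - by move: c_t0; rewrite c1 !mul0r.
case E: ubs => [|u0 us].
  have ok_max : ok (Num.max t0 (B + 1)).
    by apply: ub_ok => [|u]; rewrite ?E ?le_max ?lexx.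
  by have := bounded _ ok_max; rewrite ge_max => /andP[_]; lra.
have [m m_ubs m_min] :=
  exists_minimal (@le_total _ R) (@le_trans _ R) (mem_head u0 us).
exists m => [|t ok_t]; last by apply: ok_ub; rewrite ?E.
apply: (ub_ok m) => [|u]; last by rewrite E; exact: m_min.
by apply: ok_ub ok_t0 _ _; rewrite E.
Qed.

Variable I : finType.
Implicit Types (cs : seq (ineq R I)) (f : {ffun I -> R}) (x : I -> R).

Lemma big_option (F : option I -> R) :
  \sum_(o : option I) F o = F None + \sum_(i : I) F (Some i).
Proof.
rewrite /index_enum !unlock /=; congr (_ + _).
by rewrite /reducebig foldr_map !unlock.
Qed.

(* Constraints on [(t, x)], with [t] stored at [None], saying that [x] solves
   [cs] and [t <= f . x]. *)
Definition lift_ineq (c : ineq R I) : ineq R (option I) :=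
  ([ffun o => if o is Some i then c.1 i else 0], c.2).
Definition hypograph_ineq f : ineq R (option I) :=
  ([ffun o => if o is Some i then - f i else 1], 0).

Lemma solves_hypograph cs f x (w : option I -> R) :
  (forall i, w (Some i) = x i) ->
  solves (hypograph_ineq f :: map lift_ineq cs) w =
  (w None <= dotf f x) && solves cs x.
Proof.
move=> wx; rewrite /solves /= all_map /dotf big_option ffunE mul1r.
under eq_bigr do rewrite ffunE mulNr wx.
rewrite sumrN subr_le0; congr (_ && _); apply: eq_all => c /=.
rewrite big_option ffunE mul0r add0r.
by congr (_ <= _); apply: eq_bigr => i _; rewrite ffunE wx.
Qed.

Lemma lp_max_attained cs f x0 (B : R) :
  solves cs x0 -> (forall x, solves cs x -> dotf f x <= B) ->
  exists2 x, solves cs x & forall z, solves cs z -> dotf f z <= dotf f x.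
Proof.
move=> sol_x0 bounded.
pose js := [seq Some i | i <- enum I].
have Some_js i : Some i \in js by rewrite map_f ?mem_enum.
have None_js : None \notin js by apply/mapP => -[].
pose cs' := fm_elim_all js (hypograph_ineq f :: map lift_ineq cs).
pose ok t := all (fun c : R * R => c.1 * t <= c.2)
                 [seq ((c : ineq R (option I)).1 None, c.2) | c <- cs'].
have okP t : ok t <-> exists2 x, solves cs x & t <= dotf f x.
  have -> : ok t = solves cs' (fun _ => t).
    rewrite /ok all_map; apply: eq_in_all => c c_cs' /=.
    rewrite /dotf big_option big1 ?addr0 // => i _.
    by rewrite (fm_elim_all_coef c_cs') ?mul0r.
  rewrite fm_elim_allP; split=> [[y]|[x sol_x t_fx]].
    rewrite (@solves_hypograph _ _ (fun i => y (Some i))) => [|i].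
      rewrite /fmerge (negbTE None_js) => /andP[t_fy sol_y].
      by exists (fun i => y (Some i)).
    by rewrite /fmerge Some_js.
  exists (fun o => if o is Some i then x i else t).
  rewrite (@solves_hypograph _ _ x) => [|i]; last by rewrite /fmerge Some_js.
  by rewrite /fmerge (negbTE None_js) t_fx.
have [m /okP[x sol_x m_fx] m_max] : exists2 m, ok m & forall t, ok t -> t <= m.
  apply: (@max_attained_1d _ (dotf f x0) B); first by apply/okP; exists x0.
  by move=> t /okP[x sol_x t_fx]; apply: le_trans t_fx (bounded x sol_x).
by exists x => // z sol_z; apply: le_trans m_fx; apply/m_max/okP; exists z.
Qed.

End LinearProgram.

Lemma lex_le_total : total lex_le.
Proof.
elim=> [|x s IH] [|y t] //=.
by case: (ltngtP x y) => //= ->; rewrite eqxx /= IH.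
Qed.

Lemma lex_le_trans : transitive lex_le.
Proof.
move=> t s; elim: s t => [|x s IH] [|y t] [|z u] //=.
case/orP=> [yx|/andP[/eqP <- st]] /orP[xz|/andP[/eqP <- tu]].
- by rewrite (ltn_trans yx xz).
- by rewrite yx.
- by rewrite xz.
- by rewrite eqxx (IH _ _ st tu) orbT.
Qed.

Definition solo_bid (R : realFieldType) (n : nat) (u : 'I_n) (a : R) : vec R n :=
  fun e => a * unitv R u e.

Lemma solo_bid_nonneg (R : realFieldType) (n : nat) (u : 'I_n) (a : R) :
  0 <= a -> nonneg (solo_bid u a).
Proof.
by move=> a_ge0 e; rewrite /solo_bid /unitv; case: (e == u); rewrite ?mulr1 ?mulr0.
Qed.

Section VertexCover.
Variables (R : realFieldType) (n : nat) (adj : rel 'I_n).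
Implicit Types (c x : vec R n) (S T : {set 'I_n}) (u v e : 'I_n).

Definition cover_le c S T :=
  (wt c S < wt c T) || ((wt c S == wt c T) && lex_le (elems S) (elems T)).

Lemma cover_le_total c : total (cover_le c).
Proof.
move=> S T; rewrite /cover_le eq_sym.
by case: (ltrgtP (wt c S) (wt c T)) => //= _; exact: lex_le_total.
Qed.

Lemma cover_le_trans c : transitive (cover_le c).
Proof.
move=> T S U; rewrite /cover_le.
case/orP=> [ST|/andP[/eqP-> ST]] /orP[TU|/andP[/eqP<- TU]].
- by rewrite (lt_trans ST TU).
- by rewrite ST.
- by rewrite TU.
- by rewrite eqxx (lex_le_trans ST TU) orbT.
Qed.

Lemma cover_setT : is_cover adj setT.
Proof. by apply/forallP => u; apply/forallP => v; rewrite in_setT implybT. Qed.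

Lemma opt_cover_optS c : opt_cover adj c (optS adj c).
Proof.
rewrite /optS; case: pickP => [//|no_opt]; exfalso.
have setT_covers : setT \in enum (is_cover adj) by rewrite mem_enum; exact: cover_setT.
have [S S_covers S_min] :=
  exists_minimal (@cover_le_total c) (@cover_le_trans c) setT_covers.
have S_cover : is_cover adj S by rewrite mem_enum in S_covers.
move: (no_opt S); rewrite /opt_cover S_cover /=; move/negP; apply.
by apply/forallP => T; apply/implyP => T_cover; apply: S_min; rewrite mem_enum.
Qed.

Lemma optS_cover c : is_cover adj (optS adj c).
Proof. by case/andP: (opt_cover_optS c). Qed.

Lemma optS_min c T : is_cover adj T -> wt c (optS adj c) <= wt c T.
Proof.
move=> T_covers; case/andP: (opt_cover_optS c) => _ /forallP/(_ T).
by rewrite T_covers => /orP[/ltW//|/andP[/eqP-> _]].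
Qed.

Lemma wt_setC x S : wt x S + wt x (~: S) = \sum_i x i.
Proof.
rewrite /wt [RHS](bigID (mem S)) /=; congr (_ + _).
by apply: eq_bigl => i; rewrite in_setC.
Qed.

Lemma wt_unitv u X : wt (unitv R u) X = (u \in X)%:R.
Proof.
rewrite /wt /unitv -big_mkcondr.
have [uX|uX] := boolP (u \in X).
  by rewrite (big_pred1 u) // => e /=; case: (eqVneq e u) => [->|_]; rewrite ?uX ?andbF.
by rewrite big_pred0 // => e; case: (eqVneq e u) => [->|_]; rewrite ?(negbTE uX) ?andbF.
Qed.

Definition indf S : {ffun 'I_n -> R} := [ffun i => (i \in S)%:R].

Lemma dotf_indf S x : dotf (indf S) x = wt x S.
Proof.
rewrite /dotf /wt [RHS]big_mkcond; apply: eq_bigr => i _.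
by rewrite ffunE; case: (i \in S); rewrite ?mul1r ?mul0r.
Qed.

Definition nu_ineqs c : seq (ineq R 'I_n) :=
  [seq ([ffun i => - indf [set e] i], - c e) | e <- enum 'I_n] ++
  [seq (indf [set e], c e) | e <- enum (~: optS adj c)] ++
  [seq ([ffun i => indf (optS adj c) i - indf T i], 0) | T <- enum (is_cover adj)].

Lemma solves_nu_ineqs c x : solves (nu_ineqs c) x <-> nu_feasible adj c x.
Proof.
have dotf1 e : dotf (indf [set e]) x = x e by rewrite dotf_indf /wt big_set1.
rewrite /solves !all_cat !all_map; split.
  case/and3P=> /allP lb /allP ub /allP opt.
  have c_le_x e : c e <= x e.
    by have := lb e (mem_index_enum e); rewrite /= dotfN dotf1 lerN2.
  split=> [//|]; split=> [e e_S|T T_cover].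
    apply/le_anti; rewrite c_le_x andbT.
    by have := ub e; rewrite mem_enum in_setC /= dotf1; apply.
  by have := opt T; rewrite mem_enum /= dotfB !dotf_indf subr_le0; apply.
case=> [lb [ub opt]]; apply/and3P; split; apply/allP.
- by move=> e _ /=; rewrite dotfN dotf1 lerN2.
- by move=> e; rewrite mem_enum in_setC => e_S /=; rewrite dotf1 ub.
- by move=> T; rewrite mem_enum => T_covers /=; rewrite dotfB !dotf_indf subr_le0 opt.
Qed.

Hypothesis adj_irr : irreflexive adj.

Lemma cover_setC1 e : is_cover adj (~: [set e]).
Proof.
apply/forallP => u; apply/forallP => v; apply/implyP => uv.
rewrite !in_setC !in_set1; apply: contraTT uv => /norP[/negPn/eqP-> /negPn/eqP->].
by rewrite adj_irr.
Qed.

(* Comparing [S] with the cover [~: [set e]] gives [x e <= x (~: S) = c (~: S)]. *)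
Lemma nu_feasible_bounded c x : nu_feasible adj c x ->
  wt x (optS adj c) <= \sum_(e in optS adj c) wt c (~: optS adj c).
Proof.
set S := optS adj c; move=> [_ [off_S opt]]; apply: ler_sum => e e_S.
have -> : wt c (~: S) = wt x (~: S).
  by apply: eq_bigr => i; rewrite in_setC => /off_S ->.
have := opt _ (cover_setC1 e); have := wt_setC x [set e]; have := wt_setC x S.
rewrite /wt big_set1; lra.
Qed.

Lemma is_nu_nu c : is_nu adj c (nu adj c).
Proof.
set S := optS adj c.
have c_sol : solves (nu_ineqs c) c.
  by apply/solves_nu_ineqs; split=> //; split=> // T; exact: optS_min.
have bounded z :
    solves (nu_ineqs c) z -> dotf (indf S) z <= \sum_(e in S) wt c (~: S).
  by move=> /solves_nu_ineqs/nu_feasible_bounded; rewrite dotf_indf.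
have [x /solves_nu_ineqs x_feas x_max] := lp_max_attained c_sol bounded.
apply: (epsilon_spec (inhabits 0) (is_nu adj c)); exists (wt x S); split.
  by exists x.
by move=> z /solves_nu_ineqs z_sol; rewrite -!dotf_indf x_max.
Qed.

Lemma nu_ge c x : nu_feasible adj c x -> wt x (optS adj c) <= nu adj c.
Proof. exact: (is_nu_nu c).2. Qed.

Lemma is_nuE c t : is_nu adj c t -> nu adj c = t.
Proof.
case=> [[x [x_feas <-]] t_max]; apply/le_anti/andP; split; last exact: nu_ge.
by have [[y [y_feas <-]] _] := is_nu_nu c; exact: t_max.
Qed.

Section Scaling.
Variable a : R.
Hypothesis a_gt0 : 0 < a.

Lemma wt_scale x S : wt (fun e => a * x e) S = a * wt x S.
Proof. by rewrite /wt mulr_sumr. Qed.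

Lemma optS_scale c : optS adj (fun e => a * c e) = optS adj c.
Proof.
rewrite /optS; congr odflt; apply: eq_pick => S /=.
rewrite /opt_cover; congr (_ && _); apply: eq_forallb => T.
by rewrite !wt_scale ltr_pM2l // (inj_eq (mulfI (lt0r_neq0 a_gt0))).
Qed.

Lemma nu_feasible_scale c x :
  nu_feasible adj c x -> nu_feasible adj (fun e => a * c e) (fun e => a * x e).
Proof.
move=> [c_le_x [off_S opt]]; rewrite /nu_feasible optS_scale; split; [|split].
- by move=> e; rewrite ler_pM2l.
- by move=> e /off_S ->.
- by move=> T /opt; rewrite !wt_scale ler_pM2l.
Qed.

End Scaling.

Lemma nu_scale a c : 0 < a -> nu adj (fun e => a * c e) = a * nu adj c.
Proof.
move=> a_gt0; apply: is_nuE; split.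
  have [[x [x_feas x_nu]] _] := is_nu_nu c.
  by exists (fun e => a * x e); rewrite optS_scale // wt_scale x_nu;
    split=> //; exact: nu_feasible_scale.
move=> z z_feas; rewrite optS_scale // -ler_pdivrMl //.
have ainv_gt0 : 0 < a^-1 by rewrite invr_gt0.
have := nu_feasible_scale ainv_gt0 z_feas.
have -> : (fun e => a^-1 * (a * c e)) = c.
  by apply: functional_extensionality => e; rewrite mulKf ?gt_eqF.
by move/nu_ge; rewrite wt_scale mulrC.
Qed.

(* [1_u + 1_v] is feasible for the program of [1_u], and [optS] avoids [u]. *)
Lemma nu_unitv_ge1 u v : adj u v -> 1 <= nu adj (unitv R u).
Proof.
move=> uv; set c := unitv R u; set S := optS adj c.
have uS : u \notin S.
  apply/negP => uS; have := optS_min c (cover_setC1 u).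
  by rewrite -/S !wt_unitv uS !inE eqxx ler10.
have vS : v \in S.
  by have /forallP/(_ u)/forallP/(_ v) := optS_cover c; rewrite uv (negbTE uS).
pose x e := unitv R u e + unitv R v e.
have wt_x X : wt x X = (u \in X)%:R + (v \in X)%:R.
  by rewrite /wt big_split -!/(wt _ _) !wt_unitv.
have : nu_feasible adj c x.
  split; [|split].
  - by move=> e; rewrite /x lerDl /unitv; case: (e == v).
  - move=> e eS; have /negbTE ev : e != v by apply: contraNneq eS => ->.
    by rewrite /x /c /unitv ev addr0.
  - move=> T /forallP/(_ u)/forallP/(_ v); rewrite uv -/S !wt_x (negbTE uS) vS.
    by case/orP=> ->; case: (_ \in T); rewrite /=; lra.
by move/nu_ge; rewrite wt_x (negbTE uS) vS add0r.
Qed.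

Lemma nu_solo_bid_norm u (t : R) :
  `|t| * nu adj (solo_bid u `|t|) = nu adj (unitv R u) * t ^+ 2.
Proof.
have [->|t_neq0] := eqVneq t 0; first by rewrite normr0 mul0r; ring.
rewrite /solo_bid nu_scale ?normr_gt0 // mulrA -expr2 real_normK ?num_real //.
exact: mulrC.
Qed.

End VertexCover.

Section TruthfulMechanism.
Variables (R : realFieldType) (n : nat) (adj : rel 'I_n) (M : mechanism R n).
Hypotheses (M_valid : valid_mech adj M) (M_truthful : truthful M).
Implicit Types (b : vec R n) (u v : 'I_n).

Lemma profit0_ge0 b v : nonneg b -> 0 <= profit M b v 0.
Proof.
move=> b_ge0; rewrite /profit subr0; case: ifP => // v_win.
exact: le_trans (b_ge0 v) ((M_valid b_ge0).2 v v_win).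
Qed.

Lemma sum_profit0 b : \sum_v profit M b v 0 = total_pay M b.
Proof.
by rewrite /total_pay [RHS]big_mkcond; apply: eq_bigr => v _; rewrite /profit subr0.
Qed.

(* Truthfulness for [v] with true cost [0]; [profit M b v 0] is the payment to [v]. *)
Lemma win_bid_le_profit0 b v x : nonneg b -> b v = 0 -> 0 <= x ->
  v \in win M (upd b v x) -> x <= profit M b v 0.
Proof.
move=> b_ge0 bv0 x_ge0 v_win.
have -> : b = upd b v 0.
  by apply: functional_extensionality => e; rewrite /upd; case: eqP => // ->.
apply: le_trans (M_truthful v (lexx 0) b_ge0 x_ge0); rewrite /profit v_win subr0.
have bx_ge0 : nonneg (upd b v x) by move=> e; rewrite /upd; case: (e == v).
by have := (M_valid bx_ge0).2 v v_win; rewrite /upd eqxx.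
Qed.

(* One endpoint wins when [u] bids [a] and [v] bids [b]; it is then paid enough
   under the solo bid of the other. *)
Lemma edge_profit0_bound u v (a b : R) : adj u v -> u != v -> 0 <= a -> 0 <= b ->
  a * b <= a * profit M (solo_bid u a) v 0 + b * profit M (solo_bid v b) u 0.
Proof.
move=> uv u_neq_v a_ge0 b_ge0.
have off (e w : 'I_n) (c : R) : e != w -> solo_bid w c e = 0.
  by move=> /negbTE ew; rewrite /solo_bid /unitv ew mulr0.
have two_bids : upd (solo_bid u a) v b = upd (solo_bid v b) u a.
  apply: functional_extensionality => e; rewrite /upd /solo_bid /unitv.
  have [->|_] := eqVneq e v; first by rewrite eq_sym (negbTE u_neq_v) mulr1.
  by case: (e == u); rewrite ?mulr1 ?mulr0.
have pu_ge0 := profit0_ge0 v (solo_bid_nonneg u a_ge0).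
have pv_ge0 := profit0_ge0 u (solo_bid_nonneg v b_ge0).
have bids_ge0 : nonneg (upd (solo_bid u a) v b).
  by move=> e; rewrite /upd; case: (e == v); last exact: solo_bid_nonneg.
have /forallP/(_ u)/forallP/(_ v) := (M_valid bids_ge0).1; rewrite uv /=.
case/orP=> [|v_win]; first rewrite two_bids => u_win.
  have := win_bid_le_profit0 (solo_bid_nonneg v b_ge0) (off _ _ _ u_neq_v) a_ge0 u_win.
  by move/(ler_wpM2l b_ge0); have := mulr_ge0 a_ge0 pu_ge0; lra.
have v_neq_u : v != u by rewrite eq_sym.
have := win_bid_le_profit0 (solo_bid_nonneg u a_ge0) (off _ _ _ v_neq_u) b_ge0 v_win.
by move/(ler_wpM2l a_ge0); have := mulr_ge0 b_ge0 pv_ge0; lra.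
Qed.

Hypotheses (adj_sym : symmetric adj) (adj_irr : irreflexive adj).

Lemma sum_adj_swap (F : 'I_n -> 'I_n -> R) :
  \sum_u \sum_(v | adj u v) F v u = \sum_u \sum_(v | adj u v) F u v.
Proof.
rewrite (exchange_big_dep xpredT) //=; apply: eq_bigr => u _.
by apply: eq_bigl => v; rewrite adj_sym.
Qed.

Lemma adj_form_le_payments (y : 'I_n -> R) : (forall u, 0 <= y u) ->
  \sum_u \sum_(v | adj u v) y u * y v <=
  (\sum_u y u * total_pay M (solo_bid u (y u))) *+ 2.
Proof.
move=> y_ge0; pose g u v := profit M (solo_bid u (y u)) v 0.
have g_ge0 u v : 0 <= g u v by apply/profit0_ge0/solo_bid_nonneg.
apply: (@le_trans _ _ ((\sum_u \sum_(v | adj u v) y u * g u v) *+ 2)).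
  rewrite mulr2n -[X in _ <= _ + X]sum_adj_swap -big_split /=.
  apply: ler_sum => u _; rewrite -big_split /=; apply: ler_sum => v uv.
  have u_neq_v : u != v by apply: contraTneq uv => ->; rewrite adj_irr.
  exact: edge_profit0_bound.
rewrite lerMn2r /=; apply: ler_sum => u _; rewrite -sum_profit0 mulr_sumr.
rewrite big_mkcond; apply: ler_sum => v _.
by case: ifP => _; [exact: lexx | exact: mulr_ge0 (y_ge0 u) (g_ge0 u v)].
Qed.

End TruthfulMechanism.

Lemma connected_neighbor (n : nat) (adj : rel 'I_n) :
  (forall u v, connect adj u v) -> (exists u v, adj u v) ->
  forall u, exists v, adj u v.
Proof.
move=> conn [a [b ab]] u; have [->|u_neq_a] := eqVneq u a; first by exists b.
case/connectP: (conn u a) => [[|w p]] /=.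
  by move=> _ ua; rewrite ua eqxx in u_neq_a.
by case/andP=> uw _ _; exists w.
Qed.

Lemma exists_lt_weighted (R : realDomainType) (I : finType) (y a b : I -> R) r :
  (forall i, 0 <= y i) -> r * \sum_i y i * a i < \sum_i y i * b i ->
  [exists i, r * a i < b i].
Proof.
move=> y_ge0; apply: contraTT => /existsPn b_le_a.
rewrite -leNgt mulr_sumr; apply: ler_sum => i _; rewrite mulrCA.
by apply: ler_wpM2l => //; rewrite leNgt b_le_a.
Qed.

Section AdjacencyForm.
Variables (R : realFieldType) (n : nat) (adj : rel 'I_n) (d : 'I_n -> R).
Hypothesis d_gt0 : forall u, 0 < d u.

Lemma adj_form_le_norm (x : 'I_n -> R) :
  \sum_u \sum_(v | adj u v) x u * x v <= \sum_u \sum_(v | adj u v) `|x u| * `|x v|.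
Proof.
apply: ler_sum => u _; apply: ler_sum => v _.
by rewrite -normrM real_ler_norm ?num_real.
Qed.

Lemma scaled_left_eigenvector (w : 'rV[R]_n) lam : symmetric adj ->
  w *m \matrix_(u, v) (if adj u v then (d u)^-1 else 0) = lam *: w ->
  forall u, \sum_(v | adj u v) w 0 v / d v = lam * (d u * (w 0 u / d u)).
Proof.
move=> adj_sym wK u; rewrite [d u * _]mulrCA mulfV ?lt0r_neq0 // mulr1.
have := congr1 (fun A : 'rV_n => A 0 u) wK; rewrite /= !mxE => <-.
rewrite big_mkcond; apply: eq_bigr => v _; rewrite mxE adj_sym.
by case: (adj v u); rewrite ?mulr0.
Qed.

Lemma adj_form_eigen (x : 'I_n -> R) lam :
  (forall u, \sum_(v | adj u v) x v = lam * (d u * x u)) ->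
  \sum_u \sum_(v | adj u v) x u * x v = lam * \sum_u d u * x u ^+ 2.
Proof.
move=> eig; rewrite mulr_sumr; apply: eq_bigr => u _.
by rewrite -mulr_sumr eig; ring.
Qed.

Lemma scaled_row_sqr_sum_gt0 (w : 'rV[R]_n) :
  w != 0 -> 0 < \sum_v d v * (w 0 v / d v) ^+ 2.
Proof.
move=> w_neq0; have [u wu_neq0] : exists u, w 0 u != 0.
  apply/existsP; apply: contraNT w_neq0 => /existsPn w0.
  by apply/eqP/rowP => u; rewrite mxE; apply/eqP/negPn/w0.
have xu_neq0 : w 0 u / d u != 0 by rewrite mulf_neq0 // invr_neq0 // lt0r_neq0.
rewrite (bigD1 u) //=; apply: lt_le_trans (_ : 0 < d u * (w 0 u / d u) ^+ 2) _.
  by rewrite mulr_gt0 ?exprn_even_gt0.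
rewrite lerDl; apply: sumr_ge0 => v _; exact: mulr_ge0 (ltW (d_gt0 v)) (sqr_ge0 _).
Qed.

End AdjacencyForm.

Theorem mainTheorem3 (R : realFieldType) (n : nat) (adj : rel 'I_n)
  (adj_sym : symmetric adj) (adj_irr : irreflexive adj)
  (conn : forall u v : 'I_n, connect adj u v)
  (has_edge : exists u v : 'I_n, adj u v)
  (lam : R)
  (lam_eig : eigenvalue (Kmx R adj) lam)
  (lam_max : forall m : R, eigenvalue (Kmx R adj) m -> m <= lam)
  (M : mechanism R n) (M_valid : valid_mech adj M) (M_truthful : truthful M) :
  frugality_ge adj M (lam / 2).
Proof.
move=> r r_lt; pose d u := nu adj (unitv R u).
have d_gt0 u : 0 < d u.
  have [v uv] := connected_neighbor conn has_edge u.
  exact: lt_le_trans ltr01 (nu_unitv_ge1 R adj_irr uv).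
case/eigenvalueP: lam_eig => w wK w_neq0.
pose x u := w 0 u / d u; pose y u := `|x u|; pose c u := solo_bid u (y u).
pose Q := \sum_u d u * x u ^+ 2.
have Q_gt0 : 0 < Q := scaled_row_sqr_sum_gt0 d_gt0 w_neq0.
have lamQ : lam * Q <= (\sum_u y u * total_pay M (c u)) *+ 2.
  rewrite -(adj_form_eigen (scaled_left_eigenvector d_gt0 adj_sym wK)).
  apply: le_trans (adj_form_le_norm _ x) _.
  by apply: adj_form_le_payments => // u; exact: normr_ge0.
have nuQ : \sum_u y u * nu adj (c u) = Q.
  by apply: eq_bigr => u _; exact: nu_solo_bid_norm.
have /existsP[u pay_u] : [exists u, r * nu adj (c u) < total_pay M (c u)].
  apply: (@exists_lt_weighted _ _ y) => [u|]; first exact: normr_ge0.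
  have : r * Q < lam / 2 * Q by rewrite ltr_pM2r.
  by move: lamQ; rewrite nuQ -mulr_natr; lra.
by exists (c u); split=> //; apply/solo_bid_nonneg/normr_ge0.
Qed.
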